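(* Let $X$ be a real Hilbert space, $I=\{1,\dots,m\}$, and $(T_i)_{i\in I}$ nonexpansive operators $X\to X$ with $Z_i=\operatorname{Fix}T_i$ and $Z=\bigcap_iZ_i$. Suppose there is $z\in Z$ such that each $T_i$ is projective with respect to $z$, and that $(Z_i)_{i\in I}$ is boundedly regular. Then $T=T_m\cdots T_2T_1$ is projective with respect to $z$, and for every $x_0\in X$ the sequence $(T^nx_0)_{n\in\mathbb N}$ converges strongly to some point of $Z$.
   Context: A nonexpansive $T$ with $z\in\operatorname{Fix}T$ is projective with respect to $z$ if for every bounded sequence $(x_n)$ with $\|x_n-z\|-\|Tx_n-z\|\to0$ we have $d_{\operatorname{Fix}T}(x_n)\to0$. A finite family $(C_i)$ of closed convex sets with $C=\bigcap_iC_i\ne\varnothing$ is boundedly regular if for every bounded sequence $(x_n)$, $\max_id_{C_i}(x_n)\to0$ implies $d_C(x_n)\to0$. *)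

From Stdlib Require Import Reals Lra List Classical ClassicalEpsilon.
Open Scope R_scope.

Record HilbertSpace := {
  hs_car :> Type;
  hs_zero : hs_car;
  hs_add : hs_car -> hs_car -> hs_car;
  hs_opp : hs_car -> hs_car;
  hs_scal : R -> hs_car -> hs_car;
  hs_inner : hs_car -> hs_car -> R;
  hs_add_assoc : forall x y z, hs_add x (hs_add y z) = hs_add (hs_add x y) z;
  hs_add_comm : forall x y, hs_add x y = hs_add y x;
  hs_add_0 : forall x, hs_add x hs_zero = x;
  hs_add_opp : forall x, hs_add x (hs_opp x) = hs_zero;
  hs_scal_assoc : forall a b x, hs_scal a (hs_scal b x) = hs_scal (a * b) x;
  hs_scal_1 : forall x, hs_scal 1 x = x;
  hs_scal_distr_l : forall a x y, hs_scal a (hs_add x y) = hs_add (hs_scal a x) (hs_scal a y);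
  hs_scal_distr_r : forall a b x, hs_scal (a + b) x = hs_add (hs_scal a x) (hs_scal b x);
  hs_inner_sym : forall x y, hs_inner x y = hs_inner y x;
  hs_inner_add_l : forall x y z, hs_inner (hs_add x y) z = hs_inner x z + hs_inner y z;
  hs_inner_scal_l : forall a x y, hs_inner (hs_scal a x) y = a * hs_inner x y;
  hs_inner_pos : forall x, 0 <= hs_inner x x;
  hs_inner_def : forall x, hs_inner x x = 0 -> x = hs_zero;
  hs_complete : forall u : nat -> hs_car,
    (forall eps, 0 < eps -> exists N, forall n m, (N <= n)%nat -> (N <= m)%nat ->
        sqrt (hs_inner (hs_add (u n) (hs_opp (u m))) (hs_add (u n) (hs_opp (u m)))) < eps) ->
    exists l, forall eps, 0 < eps -> exists N, forall n, (N <= n)%nat ->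
        sqrt (hs_inner (hs_add (u n) (hs_opp l)) (hs_add (u n) (hs_opp l))) < eps
}.

Section Defs.
Variable X : HilbertSpace.

Definition hsub (x y : X) : X := hs_add X x (hs_opp X y).
Definition hnorm (x : X) : R := sqrt (hs_inner X x x).

Lemma hnorm_nonneg (x : X) : 0 <= hnorm x.
Proof. unfold hnorm; apply sqrt_pos. Qed.

Definition dist_vals (C : X -> Prop) (x : X) (r : R) : Prop :=
  exists y, C y /\ r = - hnorm (hsub x y).

Lemma dist_vals_bound (C : X -> Prop) (x : X) : bound (dist_vals C x).
Proof.
  exists 0. intros r [y [_ ->]]. pose proof (hnorm_nonneg (hsub x y)). lra.
Qed.

Lemma dist_vals_ne (C : X -> Prop) (x : X) :
  (exists y, C y) -> exists r, dist_vals C x r.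
Proof. intros [y Hy]. exists (- hnorm (hsub x y)). exists y. auto. Qed.

(** d_C(x) = inf_{y in C} ||x - y|| (for nonempty C; set to 0 for empty C,
    which never occurs below). *)
Definition dist_set (C : X -> Prop) (x : X) : R :=
  match excluded_middle_informative (exists y, C y) with
  | left H => - proj1_sig (completeness (dist_vals C x) (dist_vals_bound C x)
                                        (dist_vals_ne C x H))
  | right _ => 0
  end.

Definition Fix (T : X -> X) : X -> Prop := fun x => T x = x.

Definition nonexpansive (T : X -> X) : Prop :=
  forall x y, hnorm (hsub (T x) (T y)) <= hnorm (hsub x y).

Definition bounded_seq (x : nat -> X) : Prop :=
  exists M, forall n, hnorm (x n) <= M.

Definition projective (T : X -> X) (z : X) : Prop :=
  nonexpansive T /\ Fix T z /\
  forall x : nat -> X, bounded_seq x ->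
    Un_cv (fun n => hnorm (hsub (x n) z) - hnorm (hsub (T (x n)) z)) 0 ->
    Un_cv (fun n => dist_set (Fix T) (x n)) 0.

Definition inter_family (m : nat) (C : nat -> X -> Prop) : X -> Prop :=
  fun x => forall i, (1 <= i <= m)%nat -> C i x.

Definition max_dist (m : nat) (C : nat -> X -> Prop) (x : X) : R :=
  fold_right Rmax 0 (map (fun i => dist_set (C i) x) (seq 1 m)).

Definition boundedly_regular (m : nat) (C : nat -> X -> Prop) : Prop :=
  forall x : nat -> X, bounded_seq x ->
    Un_cv (fun n => max_dist m C (x n)) 0 ->
    Un_cv (fun n => dist_set (inter_family m C) (x n)) 0.

Fixpoint comp_family (T : nat -> X -> X) (n : nat) : X -> X :=
  match n with
  | O => fun x => x
  | S k => fun x => T (S k) (comp_family T k x)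
  end.

Definition converges_to (u : nat -> X) (l : X) : Prop :=
  forall eps, 0 < eps -> exists N, forall n, (N <= n)%nat -> hnorm (hsub (u n) l) < eps.

End Defs.

Arguments hsub {X}.
Arguments hnorm {X}.
Arguments dist_set {X}.
Arguments Fix {X}.
Arguments nonexpansive {X}.
Arguments bounded_seq {X}.
Arguments projective {X}.
Arguments inter_family {X}.
Arguments max_dist {X}.
Arguments boundedly_regular {X}.
Arguments comp_family {X}.
Arguments converges_to {X}.

From Stdlib Require Import Reals Lra Psatz List Lia Classical ClassicalEpsilon.
Open Scope R_scope.

(* Along the chain x, T_1 x, T_2 T_1 x, ..., T x the distances to z decrease, so when the total
   drop ||x_n - z|| - ||T x_n - z|| tends to 0, so does every single drop.  Projectivity of each
   T_i then brings the partial composites close to Fix T_i, hence they move little, and x_n itself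
   approaches every Z_i; bounded regularity upgrades this to d_Z(x_n) -> 0, and Z is contained in
   Fix T.  The iterates T^n x_0 are Fejer monotone with respect to Z, so the drops along them tend
   to 0; hence d_Z(T^n x_0) -> 0, which together with Fejer monotonicity makes the orbit Cauchy,
   with limit in the closure of Z, that is in Z. *)

Section HilbertAlgebra.
Context {X : HilbertSpace}.

Lemma hs_add_0_l (x : X) : hs_add X (hs_zero X) x = x.
Proof. rewrite hs_add_comm, hs_add_0. reflexivity. Qed.

Lemma hs_opp_unique (a v : X) : hs_add X a v = hs_zero X -> a = hs_opp X v.
Proof.
  intros H.
  rewrite <- (hs_add_0 X a), <- (hs_add_opp X v), hs_add_assoc, H, hs_add_0_l.
  reflexivity.
Qed.

Lemma hs_opp_opp (x : X) : hs_opp X (hs_opp X x) = x.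
Proof. symmetry; apply hs_opp_unique, hs_add_opp. Qed.

Lemma hs_opp_0 : hs_opp X (hs_zero X) = hs_zero X.
Proof. symmetry; apply hs_opp_unique, hs_add_0. Qed.

Lemma hs_scal_0 (v : X) : hs_scal X 0 v = hs_zero X.
Proof.
  assert (H : hs_add X (hs_scal X 0 v) (hs_scal X 0 v) = hs_scal X 0 v).
  { rewrite <- hs_scal_distr_r. f_equal. ring. }
  rewrite <- (hs_add_opp X (hs_scal X 0 v)). rewrite <- H at 2.
  rewrite <- hs_add_assoc, hs_add_opp, hs_add_0. reflexivity.
Qed.

Lemma hs_scal_m1 (v : X) : hs_scal X (-1) v = hs_opp X v.
Proof.
  apply hs_opp_unique. rewrite <- (hs_scal_1 X v) at 2.
  rewrite <- hs_scal_distr_r. replace (-1 + 1) with 0 by ring. apply hs_scal_0.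
Qed.

Lemma hsub_eq0 (x y : X) : hsub x y = hs_zero X -> x = y.
Proof. unfold hsub; intro H. rewrite <- (hs_opp_opp y). apply hs_opp_unique, H. Qed.

Lemma hsub_0_r (x : X) : hsub x (hs_zero X) = x.
Proof. unfold hsub; rewrite hs_opp_0, hs_add_0; reflexivity. Qed.

Lemma hsub_split (x y z : X) : hsub x z = hs_add X (hsub x y) (hsub y z).
Proof.
  unfold hsub. rewrite <- hs_add_assoc, (hs_add_assoc _ (hs_opp X y) y).
  rewrite (hs_add_comm _ (hs_opp X y) y), hs_add_opp, hs_add_0_l. reflexivity.
Qed.

Lemma hs_inner_add_r (x y z : X) :
  hs_inner X x (hs_add X y z) = hs_inner X x y + hs_inner X x z.
Proof.
  rewrite hs_inner_sym, hs_inner_add_l, (hs_inner_sym _ y), (hs_inner_sym _ z). ring.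
Qed.

Lemma hs_inner_scal_r a (x y : X) : hs_inner X x (hs_scal X a y) = a * hs_inner X x y.
Proof. rewrite hs_inner_sym, hs_inner_scal_l, hs_inner_sym. ring. Qed.

Lemma hs_inner_0_l (y : X) : hs_inner X (hs_zero X) y = 0.
Proof. rewrite <- (hs_scal_0 (hs_zero X)), hs_inner_scal_l. ring. Qed.

Lemma hs_inner_add_scal (a b : X) t :
  hs_inner X (hs_add X a (hs_scal X t b)) (hs_add X a (hs_scal X t b)) =
  hs_inner X a a + 2 * t * hs_inner X a b + t * t * hs_inner X b b.
Proof.
  rewrite hs_inner_add_l, !hs_inner_add_r, !hs_inner_scal_l, !hs_inner_scal_r,
    (hs_inner_sym _ b a).
  ring.
Qed.

(* Nonnegativity of the quadratic t |-> <a + t b, a + t b>, evaluated at its minimiser (or, when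
   <b, b> = 0, at a point where the linear term is too negative). *)
Lemma hs_cauchy_schwarz (a b : X) :
  hs_inner X a b * hs_inner X a b <= hs_inner X a a * hs_inner X b b.
Proof.
  set (aa := hs_inner X a a); set (bb := hs_inner X b b); set (ab := hs_inner X a b).
  assert (Haa : 0 <= aa) by apply hs_inner_pos.
  assert (Hbb : 0 <= bb) by apply hs_inner_pos.
  destruct (Req_dec bb 0) as [Ebb|Ebb].
  - destruct (Req_dec ab 0) as [Eab|Eab]; [rewrite Eab; nra|].
    pose proof (hs_inner_pos X (hs_add X a (hs_scal X (- (aa + 1) / (2 * ab)) b))) as P.
    rewrite hs_inner_add_scal in P. fold aa bb ab in P.
    assert (2 * (- (aa + 1) / (2 * ab)) * ab = - (aa + 1)) by (field; auto).
    rewrite Ebb in P. nra.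
  - pose proof (hs_inner_pos X (hs_add X a (hs_scal X (- ab / bb) b))) as P.
    rewrite hs_inner_add_scal in P. fold aa bb ab in P.
    replace (aa + 2 * (- ab / bb) * ab + - ab / bb * (- ab / bb) * bb)
      with ((aa * bb - ab * ab) / bb) in P by (field; lra).
    apply Rmult_le_compat_r with (r := bb) in P; [|lra].
    replace ((aa * bb - ab * ab) / bb * bb) with (aa * bb - ab * ab) in P by (field; lra).
    lra.
Qed.

Lemma hnorm_add_le (a b : X) : hnorm (hs_add X a b) <= hnorm a + hnorm b.
Proof.
  unfold hnorm.
  pose proof (sqrt_pos (hs_inner X a a)); pose proof (sqrt_pos (hs_inner X b b)).
  rewrite <- (sqrt_square (sqrt (hs_inner X a a) + sqrt (hs_inner X b b))) by lra.
  apply sqrt_le_1_alt.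
  pose proof (hs_inner_add_scal a b 1) as E. rewrite hs_scal_1 in E. rewrite E.
  pose proof (sqrt_sqrt _ (hs_inner_pos X a)); pose proof (sqrt_sqrt _ (hs_inner_pos X b)).
  assert (hs_inner X a b <= sqrt (hs_inner X a a) * sqrt (hs_inner X b b)).
  { rewrite <- sqrt_mult by apply hs_inner_pos.
    apply Rle_trans with (Rabs (hs_inner X a b)); [apply Rle_abs|].
    rewrite <- sqrt_Rsqr_abs. apply sqrt_le_1_alt. apply hs_cauchy_schwarz. }
  nra.
Qed.

Lemma hnorm_sub_triangle (x y z : X) :
  hnorm (hsub x z) <= hnorm (hsub x y) + hnorm (hsub y z).
Proof. rewrite (hsub_split x y z). apply hnorm_add_le. Qed.

Lemma hnorm_sub_sym (x y : X) : hnorm (hsub x y) = hnorm (hsub y x).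
Proof.
  assert (E : hsub y x = hs_scal X (-1) (hsub x y)).
  { unfold hsub. rewrite hs_scal_distr_l, !hs_scal_m1, hs_opp_opp, hs_add_comm. reflexivity. }
  rewrite E. unfold hnorm. f_equal. rewrite hs_inner_scal_l, hs_inner_scal_r. ring.
Qed.

Lemma hnorm_sub_diag (x : X) : hnorm (hsub x x) = 0.
Proof. unfold hnorm, hsub. rewrite hs_add_opp, hs_inner_0_l. apply sqrt_0. Qed.

Lemma hnorm_sub_eq0 (x y : X) : hnorm (hsub x y) = 0 -> x = y.
Proof.
  unfold hnorm; intro H. apply hsub_eq0, hs_inner_def.
  apply sqrt_eq_0; [apply hs_inner_pos | exact H].
Qed.

Lemma hnorm_le_sub_add (w z : X) : hnorm w <= hnorm (hsub w z) + hnorm z.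
Proof. rewrite <- (hsub_0_r w) at 1. rewrite <- (hsub_0_r z) at 2. apply hnorm_sub_triangle. Qed.

Lemma hnorm_sub_le_add (w z : X) : hnorm (hsub w z) <= hnorm w + hnorm z.
Proof.
  pose proof (hnorm_sub_triangle w (hs_zero X) z) as H.
  rewrite hsub_0_r, (hnorm_sub_sym (hs_zero X) z), hsub_0_r in H. exact H.
Qed.

End HilbertAlgebra.

Lemma dist_set_le (X : HilbertSpace) (C : X -> Prop) (x y : X) : C y -> dist_set C x <= hnorm (hsub x y).
Proof.
  intro Cy. unfold dist_set.
  destruct (excluded_middle_informative _) as [H|H]; [| exfalso; eauto].
  destruct (completeness _ _ _) as [s [Hub Hlub]]; simpl.
  assert (- hnorm (hsub x y) <= s) by (apply Hub; exists y; auto). lra.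
Qed.

Lemma dist_set_nonneg (X : HilbertSpace) (C : X -> Prop) (x : X) : 0 <= dist_set C x.
Proof.
  unfold dist_set.
  destruct (excluded_middle_informative _) as [H|H]; [| lra].
  destruct (completeness _ _ _) as [s [Hub Hlub]]; simpl.
  assert (s <= 0); [|lra].
  apply Hlub. intros r [y [_ ->]]. pose proof (hnorm_nonneg _ (hsub x y)). lra.
Qed.

Section Distance.
Context {X : HilbertSpace}.
Variable C : X -> Prop.
Hypothesis C_nonempty : exists p, C p.

Lemma dist_set_approx (x : X) eps :
  0 < eps -> exists y, C y /\ hnorm (hsub x y) < dist_set C x + eps.
Proof.
  intros He. unfold dist_set.
  destruct (excluded_middle_informative _) as [H|H]; [| exfalso; eauto].
  destruct (completeness _ _ _) as [s [Hub Hlub]]; simpl.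
  apply NNPP; intro Hn.
  assert (s <= s - eps); [|lra].
  apply Hlub. intros r [y [Cy ->]].
  destruct (Rlt_le_dec (hnorm (hsub x y)) (- s + eps)); [|lra].
  exfalso; apply Hn; exists y; split; auto.
Qed.

Lemma dist_set_lipschitz (x y : X) : dist_set C x <= dist_set C y + hnorm (hsub x y).
Proof.
  apply Rle_plus_epsilon. intros eps He.
  destruct (dist_set_approx y eps He) as [p [Cp Hp]].
  pose proof (dist_set_le X C x p Cp). pose proof (hnorm_sub_triangle x y p). lra.
Qed.

Lemma dist_set_antimono (C' : X -> Prop) (x : X) :
  (forall p, C p -> C' p) -> dist_set C' x <= dist_set C x.
Proof.
  intros HCC'. apply Rle_plus_epsilon. intros eps He.
  destruct (dist_set_approx x eps He) as [p [Cp Hp]].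
  pose proof (dist_set_le X C' x p (HCC' p Cp)). lra.
Qed.

Lemma nonexpansive_fix_of_dist_set_eq0 (F : X -> X) (l : X) :
  nonexpansive F -> (forall p, C p -> F p = p) -> dist_set C l = 0 -> F l = l.
Proof.
  intros Fne CF Hl. apply hnorm_sub_eq0, Rle_antisym; [|apply hnorm_nonneg].
  apply Rle_plus_epsilon. intros eps He.
  destruct (dist_set_approx l (eps / 2) ltac:(lra)) as [p [Cp Hp]].
  pose proof (hnorm_sub_triangle (F l) p l) as Htri.
  pose proof (Fne l p) as HF. rewrite (CF p Cp) in HF.
  rewrite (hnorm_sub_sym p l) in Htri. lra.
Qed.

End Distance.

Lemma nonexpansive_displacement_le (X : HilbertSpace) (T : X -> X) (y : X) :
  nonexpansive T -> (exists p, Fix T p) -> hnorm (hsub (T y) y) <= 2 * dist_set (Fix T) y.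
Proof.
  intros Tne Hne. apply Rle_plus_epsilon. intros eps He.
  destruct (dist_set_approx (Fix T) Hne y (eps / 2)) as [p [Tp Hp]]; [lra|].
  pose proof (hnorm_sub_triangle (T y) (T p) y). pose proof (Tne y p).
  unfold Fix in Tp. rewrite Tp in *. rewrite (hnorm_sub_sym p y) in *. lra.
Qed.

Section RealSequences.

Lemma Un_cv_const0 : Un_cv (fun _ => 0) 0.
Proof. intros eps He. exists O. intros. unfold Rdist. rewrite Rminus_0_r, Rabs_R0. lra. Qed.

Lemma Un_cv_squeeze0 (u v : nat -> R) :
  (forall n, 0 <= u n <= v n) -> Un_cv v 0 -> Un_cv u 0.
Proof.
  intros Huv Hv eps He. destruct (Hv eps He) as [N HN]. exists N; intros n Hn.
  specialize (HN n Hn); specialize (Huv n). unfold Rdist in *.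
  rewrite Rminus_0_r, Rabs_pos_eq in * by lra. lra.
Qed.

Lemma Un_cv_plus0 (u v : nat -> R) : Un_cv u 0 -> Un_cv v 0 -> Un_cv (fun n => u n + v n) 0.
Proof. intros Hu Hv. pose proof (CV_plus _ _ _ _ Hu Hv) as H. rewrite Rplus_0_r in H. exact H. Qed.

Lemma Un_cv0_eventually_lt (u : nat -> R) d :
  Un_cv u 0 -> 0 < d -> exists N, forall n, (N <= n)%nat -> u n < d.
Proof.
  intros Hu Hd. destruct (Hu d Hd) as [N HN]. exists N. intros n Hn.
  specialize (HN n Hn). unfold Rdist in HN. rewrite Rminus_0_r in HN.
  pose proof (Rle_abs (u n)). lra.
Qed.

Lemma Un_cv_antitone_gap (v : nat -> R) :
  (forall n, v (S n) <= v n) -> (forall n, 0 <= v n) -> Un_cv (fun n => v n - v (S n)) 0.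
Proof.
  intros Hdec Hpos.
  destruct (decreasing_cv v) as [L HL]; [exact Hdec| |].
  { exists 0. intros r [n ->]. unfold opp_seq. specialize (Hpos n). lra. }
  assert (HL1 : Un_cv (fun n => v (S n)) L).
  { apply Un_cv_ext with (fun n => v (n + 1)%nat); [intro n; now rewrite Nat.add_1_r|].
    apply CV_shift', HL. }
  pose proof (CV_minus _ _ _ _ HL HL1) as H. now rewrite Rminus_diag in H.
Qed.

Lemma fold_right_Rmax_nonneg (l : list R) :
  (forall a, In a l -> 0 <= a) -> 0 <= fold_right Rmax 0 l.
Proof.
  induction l as [|a l IH]; simpl; intros H; [lra|].
  pose proof (Rmax_l a (fold_right Rmax 0 l)). pose proof (H a (or_introl eq_refl)). lra.
Qed.

Lemma Un_cv_fold_Rmax0 (f : nat -> nat -> R) (l : list nat) :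
  (forall i, In i l -> forall n, 0 <= f i n) ->
  (forall i, In i l -> Un_cv (f i) 0) ->
  Un_cv (fun n => fold_right Rmax 0 (map (fun i => f i n) l)) 0.
Proof.
  induction l as [|a l IH]; simpl; intros Hpos Hcv; [apply Un_cv_const0|].
  apply Un_cv_squeeze0 with (v := fun n => f a n + fold_right Rmax 0 (map (fun i => f i n) l)).
  - intro n.
    assert (0 <= fold_right Rmax 0 (map (fun i => f i n) l)).
    { apply fold_right_Rmax_nonneg. intros b Hb. apply in_map_iff in Hb.
      destruct Hb as [i [<- Hi]]. exact (Hpos i (or_intror Hi) n). }
    pose proof (Hpos a (or_introl eq_refl) n).
    pose proof (Rmax_l (f a n) (fold_right Rmax 0 (map (fun i => f i n) l))).
    split; [lra|]. apply Rmax_lub; lra.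
  - apply Un_cv_plus0; [exact (Hcv a (or_introl eq_refl))|].
    apply IH; intros i Hi; [apply Hpos | apply Hcv]; auto.
Qed.

End RealSequences.

Section Composition.
Context {X : HilbertSpace} (T : nat -> X -> X).

Lemma comp_family_fix (k : nat) (p : X) :
  (forall i, (1 <= i <= k)%nat -> T i p = p) -> comp_family T k p = p.
Proof.
  induction k as [|k IH]; simpl; intros H; auto.
  rewrite IH by (intros i Hi; apply H; lia). apply H; lia.
Qed.

Lemma comp_family_nonexpansive (k : nat) :
  (forall i, (1 <= i <= k)%nat -> nonexpansive (T i)) -> nonexpansive (comp_family T k).
Proof.
  induction k as [|k IH]; simpl; intros H x y; [lra|].
  pose proof (H (S k) ltac:(lia) (comp_family T k x) (comp_family T k y)).
  pose proof (IH (fun i Hi => H i ltac:(lia)) x y). lra.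
Qed.

End Composition.

Section Fejer.
Context {X : HilbertSpace} (Z : X -> Prop) (u : nat -> X).
Hypothesis u_fejer : forall p, Z p -> forall k, hnorm (hsub (u (S k)) p) <= hnorm (hsub (u k) p).

Lemma fejer_le (p : X) (k d : nat) : Z p -> hnorm (hsub (u (k + d)) p) <= hnorm (hsub (u k) p).
Proof.
  intros Zp. induction d as [|d IH]; [rewrite Nat.add_0_r; lra|].
  rewrite Nat.add_succ_r. pose proof (u_fejer p Zp (k + d)). lra.
Qed.

Lemma fejer_bounded (p : X) : Z p -> bounded_seq u.
Proof.
  intros Zp. exists (hnorm (hsub (u 0%nat) p) + hnorm p). intro n.
  pose proof (hnorm_le_sub_add (u n) p). pose proof (fejer_le p 0 n Zp). simpl in *. lra.
Qed.

(* Every u_k with k >= N stays within d_Z(u_N) + eps of a point of Z near u_N. *)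
Lemma fejer_cv_of_dist_cv :
  (exists p, Z p) -> Un_cv (fun n => dist_set Z (u n)) 0 -> exists l, converges_to u l.
Proof.
  intros Zne Hd.
  destruct (hs_complete X u) as [l Hl]; [|exists l; exact Hl].
  intros eps He.
  destruct (Un_cv0_eventually_lt _ (eps / 4) Hd ltac:(lra)) as [N HN].
  destruct (dist_set_approx Z Zne (u N) (eps / 4) ltac:(lra)) as [p [Zp Hp]].
  pose proof (HN N (le_n N)).
  exists N. intros n k Hn Hk. change (hnorm (hsub (u n) (u k)) < eps).
  pose proof (fejer_le p N (n - N) Zp) as Pn. replace (N + (n - N))%nat with n in Pn by lia.
  pose proof (fejer_le p N (k - N) Zp) as Pk. replace (N + (k - N))%nat with k in Pk by lia.
  pose proof (hnorm_sub_triangle (u n) p (u k)). rewrite (hnorm_sub_sym p (u k)) in *. lra.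
Qed.

End Fejer.

Lemma dist_set_limit_eq0 (X : HilbertSpace) (C : X -> Prop) (u : nat -> X) (l : X) :
  (exists p, C p) -> converges_to u l -> Un_cv (fun n => dist_set C (u n)) 0 ->
  dist_set C l = 0.
Proof.
  intros Cne Hl Hd. apply Rle_antisym; [|apply dist_set_nonneg].
  apply Rle_plus_epsilon. intros eps He.
  destruct (Hl (eps / 2) ltac:(lra)) as [N1 HN1].
  destruct (Un_cv0_eventually_lt _ (eps / 2) Hd ltac:(lra)) as [N2 HN2].
  set (n := Nat.max N1 N2).
  pose proof (HN1 n ltac:(lia)). pose proof (HN2 n ltac:(lia)).
  pose proof (dist_set_lipschitz C Cne l (u n)) as Hlip.
  rewrite hnorm_sub_sym in Hlip. lra.
Qed.

Lemma nonexpansive_orbit_cv (X : HilbertSpace) (F : X -> X) (Z : X -> Prop) (z : X) :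
  nonexpansive F -> Z z -> (forall p, Z p -> F p = p) ->
  (forall x : nat -> X, bounded_seq x ->
     Un_cv (fun n => hnorm (hsub (x n) z) - hnorm (hsub (F (x n)) z)) 0 ->
     Un_cv (fun n => dist_set Z (x n)) 0) ->
  forall x0 : X, exists l, converges_to (fun n => Nat.iter n F x0) l /\ dist_set Z l = 0.
Proof.
  intros Fne Zz ZF Hproj x0. set (u := fun n => Nat.iter n F x0).
  assert (Zne : exists p, Z p) by (exists z; exact Zz).
  assert (Hfejer : forall p, Z p -> forall k, hnorm (hsub (u (S k)) p) <= hnorm (hsub (u k) p)).
  { intros p Zp k. pose proof (Fne (u k) p) as H. rewrite (ZF p Zp) in H. exact H. }
  assert (HdZ : Un_cv (fun n => dist_set Z (u n)) 0).
  { apply Hproj; [exact (fejer_bounded Z u Hfejer z Zz)|].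
    apply (Un_cv_antitone_gap (fun n => hnorm (hsub (u n) z))).
    - intro n. apply Hfejer, Zz.
    - intro n. apply hnorm_nonneg. }
  destruct (fejer_cv_of_dist_cv Z u Hfejer Zne HdZ) as [l Hl].
  exists l. split; [exact Hl | exact (dist_set_limit_eq0 X Z u l Zne Hl HdZ)].
Qed.

Section ProjectiveComposition.
Context {X : HilbertSpace} (m : nat) (T : nat -> X -> X) (z : X).
Hypothesis T_projective : forall i, (1 <= i <= m)%nat -> projective (T i) z.

Lemma T_nonexpansive i : (1 <= i <= m)%nat -> nonexpansive (T i).
Proof. intros Hi. apply (T_projective i Hi). Qed.

Lemma T_fix_z i : (1 <= i <= m)%nat -> T i z = z.
Proof. intros Hi. apply (T_projective i Hi). Qed.

Variable x : nat -> X.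
Hypothesis x_bounded : bounded_seq x.
Hypothesis x_gap_cv :
  Un_cv (fun n => hnorm (hsub (x n) z) - hnorm (hsub (comp_family T m (x n)) z)) 0.

Local Notation partial k n := (comp_family T k (x n)).

Lemma partial_dist_antitone (j d n : nat) :
  (j + d <= m)%nat -> hnorm (hsub (partial (j + d) n) z) <= hnorm (hsub (partial j n) z).
Proof.
  induction d as [|d IH]; intros Hjd; [rewrite Nat.add_0_r; lra|].
  rewrite Nat.add_succ_r; simpl.
  pose proof (T_nonexpansive (S (j + d)) ltac:(lia) (partial (j + d) n) z) as P.
  rewrite T_fix_z in P by lia. pose proof (IH ltac:(lia)). lra.
Qed.

Lemma partial_gap_cv (k : nat) : (S k <= m)%nat ->
  Un_cv (fun n => hnorm (hsub (partial k n) z) - hnorm (hsub (partial (S k) n) z)) 0.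
Proof.
  intros Hk. apply Un_cv_squeeze0 with (2 := x_gap_cv). intro n.
  pose proof (partial_dist_antitone k 1 n ltac:(lia)).
  pose proof (partial_dist_antitone 0 k n ltac:(lia)).
  pose proof (partial_dist_antitone (S k) (m - S k) n ltac:(lia)).
  replace (S k + (m - S k))%nat with m in * by lia.
  rewrite Nat.add_1_r in *. simpl in *. lra.
Qed.

Lemma partial_bounded (k : nat) : (k <= m)%nat -> bounded_seq (fun n => partial k n).
Proof.
  intros Hk. destruct x_bounded as [M HM]. exists (M + 2 * hnorm z). intro n.
  pose proof (hnorm_le_sub_add (partial k n) z).
  pose proof (partial_dist_antitone 0 k n Hk).
  pose proof (hnorm_sub_le_add (x n) z). pose proof (HM n). simpl in *. lra.
Qed.

Lemma partial_dist_fix_cv (k : nat) : (S k <= m)%nat ->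
  Un_cv (fun n => dist_set (Fix (T (S k))) (partial k n)) 0.
Proof.
  intros Hk. apply (T_projective (S k) ltac:(lia)).
  - apply partial_bounded; lia.
  - apply partial_gap_cv, Hk.
Qed.

Lemma partial_step_cv (k : nat) : (S k <= m)%nat ->
  Un_cv (fun n => hnorm (hsub (partial (S k) n) (partial k n))) 0.
Proof.
  intros Hk.
  apply Un_cv_squeeze0 with (v := fun n => dist_set (Fix (T (S k))) (partial k n)
                                          + dist_set (Fix (T (S k))) (partial k n)).
  - intro n. split; [apply hnorm_nonneg|].
    pose proof (nonexpansive_displacement_le X (T (S k)) (partial k n)
                  (T_nonexpansive (S k) ltac:(lia)) (ex_intro _ z (T_fix_z (S k) ltac:(lia)))).
    simpl. lra.
  - apply Un_cv_plus0; apply partial_dist_fix_cv, Hk.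
Qed.

Lemma partial_drift_cv (k : nat) : (k <= m)%nat ->
  Un_cv (fun n => hnorm (hsub (partial k n) (x n))) 0.
Proof.
  induction k as [|k IH]; intros Hk.
  - apply Un_cv_ext with (fun _ => 0); [intro n; symmetry; apply hnorm_sub_diag|].
    apply Un_cv_const0.
  - apply Un_cv_squeeze0 with (v := fun n => hnorm (hsub (partial (S k) n) (partial k n))
                                          + hnorm (hsub (partial k n) (x n))).
    + intro n. split; [apply hnorm_nonneg | apply hnorm_sub_triangle].
    + apply Un_cv_plus0; [apply partial_step_cv, Hk | apply IH; lia].
Qed.

Lemma dist_fix_cv (i : nat) : (1 <= i <= m)%nat ->
  Un_cv (fun n => dist_set (Fix (T i)) (x n)) 0.
Proof.
  intros Hi. destruct i as [|k]; [lia|].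
  assert (Hne : exists p, Fix (T (S k)) p) by (exists z; apply T_fix_z, Hi).
  apply Un_cv_squeeze0 with (v := fun n => dist_set (Fix (T (S k))) (partial k n)
                                          + hnorm (hsub (partial k n) (x n))).
  - intro n. split; [apply dist_set_nonneg|].
    rewrite (hnorm_sub_sym (partial k n)). apply dist_set_lipschitz, Hne.
  - apply Un_cv_plus0; [apply partial_dist_fix_cv | apply partial_drift_cv]; lia.
Qed.

Hypothesis Fix_regular : boundedly_regular m (fun i => Fix (T i)).

Lemma dist_inter_fix_cv :
  Un_cv (fun n => dist_set (inter_family m (fun i => Fix (T i))) (x n)) 0.
Proof.
  apply Fix_regular; [exact x_bounded|].
  apply (Un_cv_fold_Rmax0 (fun i n => dist_set (Fix (T i)) (x n))); intros i Hi;
    apply in_seq in Hi.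
  - intro n. apply dist_set_nonneg.
  - apply dist_fix_cv. lia.
Qed.

End ProjectiveComposition.

Theorem proposition7p8 (X : HilbertSpace) (m : nat) (T : nat -> X -> X) (z : X) :
  (forall i, (1 <= i <= m)%nat -> nonexpansive (T i)) ->
  inter_family m (fun i => Fix (T i)) z ->
  (forall i, (1 <= i <= m)%nat -> projective (T i) z) ->
  boundedly_regular m (fun i => Fix (T i)) ->
  projective (comp_family T m) z /\
  (forall x0 : X, exists p : X,
      inter_family m (fun i => Fix (T i)) p /\
      converges_to (fun n => Nat.iter n (comp_family T m) x0) p).
Proof.
  intros Tne Zz Tproj Freg.
  set (Z := inter_family m (fun i => Fix (T i))).
  assert (Fne : nonexpansive (comp_family T m)) by (apply comp_family_nonexpansive, Tne).
  assert (ZF : forall p, Z p -> comp_family T m p = p)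
    by (intros p Zp; apply comp_family_fix, Zp).
  assert (HdZ := fun x Hb Hgap => dist_inter_fix_cv m T z Tproj x Hb Hgap Freg).
  split.
  - split; [exact Fne|]. split; [exact (ZF z Zz)|]. intros x Hb Hgap.
    apply Un_cv_squeeze0 with (v := fun n => dist_set Z (x n)); [|exact (HdZ x Hb Hgap)].
    intro n. split; [apply dist_set_nonneg|].
    apply dist_set_antimono; [exists z; exact Zz | exact ZF].
  - intros x0. destruct (nonexpansive_orbit_cv X _ Z z Fne Zz ZF HdZ x0) as [l [Hl Hl0]].
    exists l. split; [|exact Hl].
    intros i Hi. apply (nonexpansive_fix_of_dist_set_eq0 Z (ex_intro _ z Zz) (T i)).
    + apply Tne, Hi.
    + intros p Zp. apply Zp, Hi.
    + exact Hl0.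
Qed.
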